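(* Let $\Sigma:\ \dot x=-(A-M)x+d$ be $\gamma$-robust for some $\gamma>0$ and let $u=(A-M)^{-1}\mathbb{1}$. Let $a_{N+1}>0$ and define $\bar A=\begin{bmatrix}A&0\\0&a_{N+1}\end{bmatrix}$, $\bar M=\begin{bmatrix}M&0\\0&0\end{bmatrix}$ (adding node $N+1$ with no incoming or outgoing edges). Then the change $\Sigma\mapsto\bar\Sigma:\ \dot{\bar x}=-(\bar A-\bar M)\bar x+\bar d$ is scalable if and only if $a_{N+1}\ge\big(\max_{i\in\{1,\dots,N\}}u_i\big)^{-1}$.
   Context: $A=\mathrm{diag}(a_1,\dots,a_N)$ with all $a_i>0$, $M\in\mathbb{R}^{N\times N}$ has zero diagonal and nonnegative off-diagonal entries; $\mathbb{1}$ is the all-ones vector. For $\gamma>0$, a system $\dot x=-(A-M)x+d$ is $\gamma$-robust if $-(A-M)$ is Hurwitz and for every bounded disturbance $d$, the solution with $x(0)=0$ satisfies $\max_{i}|x_i(t)|\le\gamma\max_i\sup_{s\ge0}|d_i(s)|$ for all $t\ge0$. A structural change $\Sigma\mapsto\bar\Sigma$ is called scalable if, for every $\gamma>0$ for which $\Sigma$ is $\gamma$-robust, $\bar\Sigma$ is $\gamma$-robust. *)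

From HB Require Import structures.
From mathcomp Require Import all_boot all_order all_algebra.
From mathcomp Require Import all_classical all_reals all_analysis.
From mathcomp Require Import complex.
Set Implicit Arguments. Unset Strict Implicit. Unset Printing Implicit Defensive.
Import Order.TTheory GRing.Theory Num.Theory.
Import numFieldNormedType.Exports.
Local Open Scope ring_scope.
Local Open Scope classical_set_scope.

Section Defs.
Variable R : realType.

Definition hurwitz (n : nat) (H : 'M[R]_n) : Prop :=
  forall lam : R[i],
    root (map_poly (fun r : R => (r%:C)%C) (char_poly H)) lam ->
    complex.Re lam < 0.

Definition zero_state_solution (n : nat) (A M : 'M[R]_n)
    (d x : R -> 'cV[R]_n) : Prop :=
  x 0 = 0 /\
  x s @[s --> 0^'+] --> x 0 /\
  forall t : R, 0 < t -> is_derive t 1 x (- ((A - M) *m x t) + d t).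

(* The bound
   max_i |x_i(t)| <= gamma * max_i sup_{s>=0} |d_i(s)| is written out
   as: for every bound B of all |d_i(s)|, s >= 0, all |x_i(t)| are <= gamma*B. *)
Definition gamma_robust (n : nat) (A M : 'M[R]_n) (gamma : R) : Prop :=
  hurwitz (- (A - M)) /\
  forall (d x : R -> 'cV[R]_n), continuous d ->
    zero_state_solution A M d x ->
    forall B : R, (forall s i, 0 <= s -> `|d s i ord0| <= B) ->
    forall t i, 0 <= t -> `|x t i ord0| <= gamma * B.

Definition scalable_change (n m : nat) (A M : 'M[R]_n) (Ab Mb : 'M[R]_m) : Prop :=
  forall gamma : R, 0 < gamma -> gamma_robust A M gamma -> gamma_robust Ab Mb gamma.

End Defs.

From HB Require Import structures.
From mathcomp Require Import all_boot all_order all_algebra.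
From mathcomp Require Import all_classical all_reals all_analysis.
From mathcomp Require Import ring lra complex.
Set Implicit Arguments. Unset Strict Implicit. Unset Printing Implicit Defensive.
Import Order.TTheory GRing.Theory Num.Theory.
Import numFieldNormedType.Exports.
Local Open Scope ring_scope.
Local Open Scope classical_set_scope.

(* With -H = M - A Metzler and Hurwitz, u = H^-1 1 is entrywise positive
   (follow (sI + H)^-1 1 from a diagonally dominant s down to s = 0: its least
   entry can never reach 0).  Then gamma-robustness is equivalent to
   max_i u_i <= gamma: the barrier c u -/+ x (c > sup |d|) is never crossed, and
   conversely the ramp x(s) = (1 - e^(-eps s)) v, driven by an input of size
   about |H v|, forces |v_i| <= gamma |H v|_oo.  For the extended system the
   vector u gets the extra entry 1 / a_(N+1), so scalability reads
   1 / a_(N+1) <= max_i u_i. *)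

Section Barrier.
Variable R : realType.

Lemma near_right_interval (x : R) (P : R -> Prop) :
  (\forall y \near x^'+, P y) -> exists2 e, 0 < e & forall y, x < y < x + e -> P y.
Proof.
case=> e /= e0 He; exists e => // y /andP[xy ye]; apply: He => //=.
by rewrite ltr0_norm ?subr_lt0 // opprB ltrBlDl.
Qed.

Lemma near_ball (x : R) (P : R -> Prop) :
  (\forall y \near x, P y) -> exists2 e, 0 < e & forall y, `|y - x| < e -> P y.
Proof. by case=> e /= e0 He; exists e => // y ye; apply: He; rewrite /= distrC. Qed.

Lemma is_derive_gt0_root_left (f : R -> R) (t D : R) :
  0 < t -> is_derive t 1 f D -> 0 < D -> f t = 0 ->
  exists2 s, 0 <= s < t & f s < 0.
Proof.
move=> t0 [df <-] D0 ft0.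
have /cvgr_gt /(_ _ D0) /near_ball [d d0 Hd] := df.
have md : Num.min d t <= d by rewrite ge_min lexx.
have mt : Num.min d t <= t by rewrite ge_min lexx orbT.
have m0 : 0 < Num.min d t by rewrite lt_min d0 t0.
pose h := Num.min d t / 2.
have h0 : 0 < h by rewrite /h; lra.
have hd : h < d by rewrite /h; lra.
have ht : h < t by rewrite /h; lra.
exists (t - h); first by apply/andP; split; lra.
have := Hd (- h); rewrite subr0 normrN gtr0_norm // => /(_ hd).
rewrite oppr_eq0 gt_eqF //= => /(_ isT).
rewrite ft0 subr0 [_%:A]mulr1 addrC.
have hn : (- h)^-1 < 0 by rewrite invr_lt0 oppr_lt0.
by rewrite [_ *: _]/(_ * _) nmulr_rgt0.
Qed.

Lemma continuous_ge0_of_pos_before (f : R -> R) (t : R) :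
  0 < t -> {for t, continuous f} -> (forall s, 0 <= s < t -> 0 < f s) -> 0 <= f t.
Proof.
move=> t0 f_cont f_pos; rewrite leNgt; apply/negP => ft_neg.
have /cvgr_lt /(_ _ ft_neg) /near_ball [d d0 Hd] := f_cont.
have md : Num.min d t <= d by rewrite ge_min lexx.
have mt : Num.min d t <= t by rewrite ge_min lexx orbT.
have m0 : 0 < Num.min d t by rewrite lt_min d0 t0.
pose s := t - Num.min d t / 2.
have : f s < 0 by apply: Hd; rewrite /s addrAC subrr add0r normrN gtr0_norm; lra.
by rewrite ltNge ltW // f_pos //; apply/andP; split; rewrite /s; lra.
Qed.

Lemma family_pos_near (I : finType) (g : I -> R -> R) (t : R) :
  (forall k, {for t, continuous (g k)}) -> (forall k, 0 < g k t) ->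
  exists2 d, 0 < d & forall s, `|s - t| < d -> forall k, 0 < g k s.
Proof.
move=> g_cont g_pos; apply: near_ball.
apply: (@filter_forall R I (fun k s => 0 < g k s) (nbhs t)) => k.
exact: cvgr_gt (g_cont k) _ (g_pos k).
Qed.

Lemma family_stays_positive (I : finType) (g : I -> R -> R) :
  (forall k, 0 < g k 0) ->
  (forall k, g k s @[s --> 0^'+] --> g k 0) ->
  (forall k t, 0 < t -> {for t, continuous (g k)}) ->
  (forall t, 0 < t -> forall k, (forall j, 0 <= g j t) -> g k t = 0 ->
     exists2 D, 0 < D & is_derive t 1 (g k) D) ->
  forall t, 0 <= t -> forall k, 0 < g k t.
Proof.
move=> g0 g_right g_cont g_escape.
pose S := [set t : R | 0 <= t /\ forall s, 0 <= s <= t -> forall k, 0 < g k s].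
suff S_all : forall t, 0 <= t -> S t.
  by move=> t t0 k; apply: (S_all t t0).2; rewrite t0 lexx.
move=> t1 t10; apply: contrapT => notS1.
have S_ub : ubound S t1.
  move=> t [t0 Ht]; rewrite leNgt; apply/negP => t1t; apply: notS1; split => //.
  by move=> s /andP[s0 st1]; apply: Ht; rewrite s0 (le_trans st1 (ltW t1t)).
have [e e0 He] : exists2 e, 0 < e & forall s, 0 < s < e -> forall k, 0 < g k s.
  have : \forall s \near 0^'+, forall k, 0 < g k s.
    by apply: filter_forall => k; exact: cvgr_gt (g_right k) _ (g0 k).
  by move/near_right_interval => [e e0 He]; exists e => // s se; apply: He; rewrite add0r.
have S_e2 : S (e / 2).
  split=> [|s /andP[s0 se] k]; first by lra.
  have [->|s_ne0] := eqVneq s 0; first exact: g0.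
  by apply: He; apply/andP; split; lra.
have S_sup : has_sup S by split; [exists (e / 2) | exists t1].
set t0 := sup S.
have t0_pos : 0 < t0.
  by apply: (@lt_le_trans _ _ (e / 2)); [lra | exact: sup_upper_bound S_sup _ S_e2].
have pos_before s : 0 <= s < t0 -> forall k, 0 < g k s.
  move=> /andP[s0 st0] k; have ts : 0 < t0 - s by rewrite subr_gt0.
  have [r [r0 Hr] sr] := sup_adherent ts S_sup.
  by apply: Hr; rewrite s0 /= ltW //; rewrite -/t0 in sr; lra.
have nonneg_at k : 0 <= g k t0.
  by apply: continuous_ge0_of_pos_before (g_cont k t0 t0_pos) _ => // s /pos_before.
have [k gk0] : exists k, g k t0 = 0.
  apply: contrapT => no_root.
  have pos_at k : 0 < g k t0.
    by rewrite lt_neqAle nonneg_at andbT eq_sym; apply/eqP => gk0; apply: no_root; exists k.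
  have [d d0 Hd] := family_pos_near (fun k => g_cont k t0 t0_pos) pos_at.
  suff : S (t0 + d / 2) by move/(sup_upper_bound S_sup); rewrite -/t0; lra.
  split=> [|s /andP[s0 sle] k]; first by lra.
  have [st0|t0s] := ltP s t0; first by apply: pos_before; rewrite s0.
  by apply: Hd; rewrite ger0_norm; lra.
have [D D0 dD] := g_escape t0 t0_pos k nonneg_at gk0.
have [s /andP[s0 st0]] := is_derive_gt0_root_left t0_pos dD D0 gk0.
by rewrite ltNge ltW // pos_before // s0.
Qed.

End Barrier.

Section Comparison.
Variable R : realType.

Definition offdiag_nonpos n (H : 'M[R]_n) := forall i j, i != j -> H i j <= 0.

Lemma cvg_mx_entry m n (T : Type) (F : set_system T) (FF : Filter F)
    (f : T -> 'M[R]_(m, n)) (l : 'M[R]_(m, n)) i j :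
  f @ F --> l -> (fun s => f s i j) @ F --> l i j.
Proof. exact: continuous_cvg (@coord_continuous R m n i j l). Qed.

Lemma is_derive_mx_entry m n (x : R -> 'M[R]_(m, n)) (t : R) (D : 'M[R]_(m, n)) i j :
  is_derive t 1 x D -> is_derive t 1 (fun s => x s i j) (D i j).
Proof.
case=> dx <-; have dxij := (derivable_mxP x t 1).1 dx i j.
by split=> //; rewrite (derive_mx dx) mxE.
Qed.

Lemma is_derive_mx m n (X : R -> 'M[R]_(m, n)) (t : R) (D : 'M[R]_(m, n)) :
  (forall i j, is_derive t 1 (fun s => X s i j) (D i j)) -> is_derive t 1 X D.
Proof.
move=> XD; have dX : derivable X t 1 by apply/derivable_mxP => i j; case: (XD i j).
by apply: DeriveDef => //; apply/matrixP => i j; rewrite derive_mx // mxE; case: (XD i j).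
Qed.

Lemma metzler_touching_row n (H : 'M[R]_n) (u y : 'cV[R]_n) (c : R) k :
  offdiag_nonpos H ->
  (forall j, y j ord0 <= c * u j ord0) -> y k ord0 = c * u k ord0 ->
  c * (H *m u) k ord0 <= (H *m y) k ord0.
Proof.
move=> H_offdiag y_le y_k; rewrite !mxE mulr_sumr; apply: ler_sum => j _.
rewrite mulrCA; have [->|jk] := eqVneq j k; first by rewrite y_k.
by apply: ler_wnM2l; [apply: H_offdiag; rewrite eq_sym | exact: y_le].
Qed.

Lemma supersolution_touch_escape n (H : 'M[R]_n) (u y e : 'cV[R]_n) (B c : R) k :
  offdiag_nonpos H -> (forall i, (H *m u) i ord0 = 1) -> B < c ->
  (forall j, y j ord0 <= c * u j ord0) -> y k ord0 = c * u k ord0 -> e k ord0 <= B ->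
  0 < (H *m y - e) k ord0.
Proof.
move=> H_offdiag Hu Bc y_le y_k e_le.
have := metzler_touching_row H_offdiag y_le y_k; rewrite Hu mulr1 !mxE => Hy.
by rewrite subr_gt0 (le_lt_trans e_le) // (lt_le_trans Bc).
Qed.

Lemma zero_state_solution_bound n (A M : 'M[R]_n) (u : 'cV[R]_n)
    (d x : R -> 'cV[R]_n) (B : R) :
  offdiag_nonpos (A - M) ->
  (forall i, 0 < u i ord0) ->
  (forall i, ((A - M) *m u) i ord0 = 1) ->
  zero_state_solution A M d x ->
  (forall s i, 0 <= s -> `|d s i ord0| <= B) ->
  forall t i, 0 <= t -> `|x t i ord0| <= B * u i ord0.
Proof.
move=> H_offdiag u_pos Hu [x0 [x_right x_der]] dB t i t0.
have B0 : 0 <= B := le_trans (normr_ge0 _) (dB 0 i (lexx 0)).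
apply/ler_addgt0Pr => e e0.
rewrite -[e](@divfK _ (u i ord0)) ?gt_eqF // -mulrDl.
set c := B + e / u i ord0.
have c_gtB : B < c by rewrite /c ltrDl divr_gt0.
have c0 : 0 < c by lra.
pose g (kb : 'I_n * bool) s := c * u kb.1 ord0 - (-1) ^+ kb.2 * x s kb.1 ord0.
have x_entry_der (s : R) k : 0 < s ->
    is_derive s 1 (fun s => x s k ord0) ((- ((A - M) *m x s) + d s) k ord0).
  by move=> s0; exact: is_derive_mx_entry (x_der s s0).
have g_pos : forall kb, 0 < g kb t.
  move=> kb; apply: family_stays_positive => // {kb}.
  - by move=> [k b]; rewrite /g x0 mxE mulr0 subr0 mulr_gt0.
  - move=> [k b]; apply: cvgB; first exact: cvg_cst.
    by apply: cvgM; [exact: cvg_cst | exact: cvg_mx_entry x_right].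
  - move=> [k b] s s0; apply: cvgB; first exact: cvg_cst.
    apply: cvgM; first exact: cvg_cst.
    by case: (x_entry_der s k s0) => /derivable1_diffP /differentiable_continuous.
  - move=> s s0 [k b] g_ge0 gk0; pose sg : R := (-1) ^+ b.
    have y_le j : (sg *: x s) j ord0 <= c * u j ord0.
      by have := g_ge0 (j, b); rewrite /g /= subr_ge0 mxE.
    have y_k : (sg *: x s) k ord0 = c * u k ord0.
      by apply/eqP; rewrite mxE eq_sym -subr_eq0 -gk0.
    have e_le : (sg *: d s) k ord0 <= B.
      by rewrite mxE (le_trans (ler_norm _)) // normrM normr_sign mul1r dB // ltW.
    exists (((A - M) *m (sg *: x s) - sg *: d s) k ord0).
      by apply: supersolution_touch_escape c_gtB y_le y_k e_le.
    have := is_deriveB (is_derive_cst (c * u k ord0) s 1)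
      (is_deriveZ sg (x_entry_der s k s0)).
    have -> : ((A - M) *m (sg *: x s) - sg *: d s) k ord0 =
        - (sg * (- ((A - M) *m x s) + d s) k ord0).
      by rewrite -scalemxAr !mxE; ring.
    by rewrite sub0r.
have := g_pos (i, false); have := g_pos (i, true); rewrite /g /= expr0 expr1 !mul1r.
by rewrite ler_norml; move=> *; apply/andP; split; lra.
Qed.

End Comparison.

Section Necessity.
Variable R : realType.

Lemma is_derive_expR_scale (a t : R) :
  is_derive t 1 (fun s => expR (a * s)) (a * expR (a * t)).
Proof.
have [da a_der] : is_derive t 1 (fun s : R => a * s) a.
  by have := is_deriveZ a (is_derive_id t 1); rewrite [a *: 1]mulr1.
have d_comp : derivable (expR \o (fun s : R => a * s)) t 1.
  apply/derivable1_diffP/differentiable_comp; first exact/derivable1_diffP.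
  exact/derivable1_diffP/(@derivable_expR R).
apply: DeriveDef => //; have := @derive1_comp R _ expR t da (@derivable_expR R (a * t)).
by rewrite !derive1E a_der => ->; rewrite derive_val mulrC.
Qed.

Lemma continuous_expR_scale (a : R) : continuous (fun s : R => expR (a * s)).
Proof.
move=> s; have [da _] := is_derive_expR_scale a s.
exact/differentiable_continuous/derivable1_diffP.
Qed.

Lemma le_of_expR_weighted_le (a b : R) :
  (forall S, 0 <= S -> (1 - expR (- S)) * a <= b) -> 0 <= a -> a <= b.
Proof.
move=> weighted a0; apply/ler_addgt0Pr => e e0.
pose S := a / e.
have S0 : 0 <= S by rewrite divr_ge0 // ltW.
have a_eq : a = S * e by rewrite divfK ?gt_eqF.
have tail_small : expR (- S) * a <= e.
  have : expR (- S) * (1 + S) <= 1.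
    by rewrite expRN mulrC ler_pdivrMr ?expR_gt0 // mul1r expR_ge1Dx.
  by have := expR_ge0 (- S); rewrite a_eq; nra.
by have := weighted S S0; lra.
Qed.

Lemma ramp_input_bound (eps E p q C K : R) :
  0 < eps -> 0 < E <= 1 -> `|p| <= C -> `|q| <= K ->
  `|eps * E * p + (1 - E) * q| <= eps * C + K.
Proof.
move=> eps0 /andP[E0 E1] pC qK; have E1' : 0 <= 1 - E by rewrite subr_ge0.
rewrite (le_trans (ler_normD _ _)) // !normrM (ger0_norm (ltW eps0)).
rewrite (ger0_norm (ltW E0)) (ger0_norm E1') lerD //.
  by rewrite -mulrA ler_pM2l // (le_trans _ pC) // ler_piMl.
by rewrite (le_trans _ qK) // ler_piMl // lerBlDr lerDl ltW.
Qed.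

Lemma gamma_robust_ramp_bound n (A M : 'M[R]_n) (gamma K C eps T : R) (v : 'cV[R]_n) i :
  gamma_robust A M gamma -> (forall j, `|((A - M) *m v) j ord0| <= K) ->
  (forall j, `|v j ord0| <= C) -> 0 < eps -> 0 <= T ->
  (1 - expR (- eps * T)) * `|v i ord0| <= gamma * (eps * C + K).
Proof.
case=> _ robust Hv_le v_le eps0 T0; set w := (A - M) *m v in Hv_le.
pose E (s : R) := expR (- eps * s).
pose x s := (1 - E s) *: v.
pose d s := (eps * E s) *: v + (1 - E s) *: w.
have E_range s : 0 <= s -> 0 < E s <= 1.
  by move=> s0; rewrite expR_gt0 expR_le1 mulNr oppr_le0 mulr_ge0 // ltW.
have E_cont : continuous E := continuous_expR_scale (a := - eps).
have ramp_der (t : R) : is_derive t 1 (fun s => 1 - E s) (eps * E t).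
  have := is_deriveB (is_derive_cst (1 : R) t 1) (is_derive_expR_scale (- eps) t).
  by rewrite sub0r mulNr opprK.
have ramp_cont : continuous (fun s => 1 - E s).
  by move=> s; apply: cvgB; [exact: cvg_cst | exact: E_cont].
suff : `|x T i ord0| <= gamma * (eps * C + K).
  by rewrite mxE normrM ger0_norm // subr_ge0; case/andP: (E_range T T0).
apply: (robust d x _ _ (eps * C + K) _ T i T0).
- move=> s; apply: cvgD; apply: cvgZ; try exact: cvg_cst.
    by apply: cvgM; [exact: cvg_cst | exact: E_cont].
  exact: ramp_cont.
- split; first by rewrite /x /E mulr0 expR0 subrr scale0r.
  split; first by apply: cvg_at_right_filter; apply: cvgZ; [exact: ramp_cont | exact: cvg_cst].
  move=> t t0; have -> : - ((A - M) *m x t) + d t = (eps * E t) *: v.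
    by rewrite /d /x -scalemxAr -/w addrC addrK.
  apply: is_derive_mx => p q; rewrite mxE mulrC.
  have -> : (fun s => x s p q) = v p q \*: (fun s => 1 - E s).
    by apply/funext => s; rewrite /x mxE mulrC.
  exact: is_deriveZ.
- move=> s j s0; have -> : d s j ord0 = eps * E s * v j ord0 + (1 - E s) * w j ord0.
    by rewrite !mxE.
  exact: ramp_input_bound (E_range s s0) (v_le j) (Hv_le j).
Qed.

Lemma gamma_robust_inverse_bound n (A M : 'M[R]_n) (gamma K : R) (v : 'cV[R]_n) i :
  gamma_robust A M gamma -> 0 < gamma ->
  (forall j, `|((A - M) *m v) j ord0| <= K) -> `|v i ord0| <= gamma * K.
Proof.
move=> robust gamma0 Hv_le; apply: le_of_expR_weighted_le => // S S0.
pose C := \sum_j `|v j ord0|.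
have v_le j : `|v j ord0| <= C.
  by rewrite /C (bigD1 j) //= lerDl sumr_ge0.
have C0 : 0 <= C := le_trans (normr_ge0 _) (v_le i).
apply/ler_addgt0Pr => e e0.
pose eps := e / (gamma * (C + 1)).
have gC : 0 < gamma * (C + 1) by rewrite mulr_gt0 //; lra.
have eps0 : 0 < eps by rewrite divr_gt0.
have := gamma_robust_ramp_bound i robust Hv_le v_le eps0 (divr_ge0 S0 (ltW eps0)).
rewrite mulNr [eps * _]mulrC divfK ?gt_eqF //.
have eps_e : gamma * eps * (C + 1) = e.
  by rewrite /eps; field; rewrite !gt_eqF //; lra.
have := mulr_ge0 (ltW gamma0) (ltW eps0); nra.
Qed.

End Necessity.

Section Resolvent.
Variable R : realType.

Lemma horner_char_poly n (X : 'M[R]_n) (s : R) : (char_poly X).[s] = \det (s%:M - X).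
Proof.
rewrite -horner_evalE -det_map_mx map_mxB map_scalar_mx /= horner_evalE hornerX.
by congr (\det (_ - _)); apply/matrixP => i j; rewrite !mxE /= horner_evalE hornerC.
Qed.

Lemma hurwitz_det_neq0 n (X : 'M[R]_n) (s : R) :
  hurwitz X -> 0 <= s -> \det (s%:M - X) != 0.
Proof.
move=> hX s0; apply/negP => /eqP det0.
have root_s : root (char_poly X) s by rewrite /root horner_char_poly det0.
by have := hX (s%:C)%C; rewrite fmorph_root => /(_ root_s) /=; rewrite ltNge s0.
Qed.

Lemma hurwitz_block_scalar n (X : 'M[R]_n) (c : R) :
  hurwitz X -> 0 < c -> hurwitz (block_mx X 0 0 (- c)%:M : 'M[R]_(n + 1)).
Proof.
move=> hX c0 lam; rewrite /char_poly char_block_diag_mx det_ublock rmorphM rootM.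
case/orP; first exact: hX.
rewrite det_mx11 !mxE mulr1n rmorphB /= map_polyX map_polyC /root.
by rewrite hornerD hornerN hornerX hornerC subr_eq0 => /eqP -> /=; rewrite oppr_lt0.
Qed.

Lemma hurwitz_unitmx n (H : 'M[R]_n) : hurwitz (- H) -> H \in unitmx.
Proof.
move=> hH; have := hurwitz_det_neq0 hH (lexx 0).
by rewrite opprK -scalemx1 scale0r add0r unitmxE unitfE.
Qed.

Lemma continuous_cramer_entry n (H : 'M[R]_n) (v : 'cV[R]_n) k (s : R) :
  \det (s%:M + H) != 0 ->
  {for s, continuous (fun t => ((\det (t%:M + H))^-1 *: (\adj (t%:M + H) *m v)) k ord0)}.
Proof.
move=> det_s; pose Q : 'M[{poly R}]_n := 'X%:M + map_mx polyC H.
have Q_eval t : map_mx (horner_eval t) Q = t%:M + H.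
  rewrite map_mxD map_scalar_mx /= horner_evalE hornerX -map_mx_comp.
  by congr (_ + _); apply/matrixP => i j; rewrite !mxE /= horner_evalE hornerC.
have -> : (fun t => ((\det (t%:M + H))^-1 *: (\adj (t%:M + H) *m v)) k ord0) =
    (fun t => (\sum_l (\adj Q) k l * (v l ord0)%:P).[t] * ((\det Q).[t])^-1).
  apply/funext => t; rewrite mxE mulrC mxE horner_sum -horner_evalE -det_map_mx Q_eval.
  congr (_ / _); apply: eq_bigr => l _.
  by rewrite hornerM hornerC -Q_eval -map_mx_adj mxE.
apply: continuousM; first exact: continuous_horner.
by apply: continuousV; [rewrite -horner_evalE -det_map_mx Q_eval | exact: continuous_horner].
Qed.

End Resolvent.

Section MinimumPositivity.
Variable R : realType.

Lemma bigmin_id_or_attained (I : finType) (x : R) (F : I -> R) :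
  \big[Num.min/x]_i F i = x \/ exists k, \big[Num.min/x]_i F i = F k.
Proof.
apply: (big_ind (fun y => y = x \/ exists k, y = F k)); [by left | | by move=> k; right; exists k].
by move=> y z hy hz; rewrite minEle; case: leP.
Qed.

Lemma continuous_bigmin (I : finType) (x : R) (F : I -> R -> R) (s : R) :
  (forall i, {for s, continuous (F i)}) ->
  {for s, continuous (fun t => \big[Num.min/x]_i F i t)}.
Proof.
move=> F_cont; elim: (index_enum I) => [|j r IH].
  by rewrite (_ : (fun t => _) = cst x); [exact: cvg_cst | apply/funext => t; rewrite big_nil].
rewrite (_ : (fun t => _) = F j \min (fun t => \big[Num.min/x]_(i <- r) F i t)).
  exact: continuous_min (F_cont j) IH.
by apply/funext => t; rewrite big_cons.
Qed.

Lemma pos_of_min_never_zero (I : finType) (f : I -> R -> R) (a b : R) :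
  a <= b -> (forall i s, a <= s <= b -> {for s, continuous (f i)}) ->
  (forall i, 0 < f i b) ->
  (forall s k, a <= s <= b -> (forall j, f k s <= f j s) -> f k s <> 0) ->
  forall i, 0 < f i a.
Proof.
move=> ab f_cont f_b min_nonzero i; rewrite ltNge; apply/negP => fi_a.
pose m s := \big[Num.min/1]_j f j s.
have m_cont : {within `[a, b], continuous m}.
  apply: continuous_in_subspaceT => s; rewrite inE /= in_itv /= => s_ab.
  by apply: continuous_bigmin => j; exact: f_cont.
have m_a : m a <= 0 by apply: le_trans fi_a; exact: bigmin_le.
have m_b : 0 < m b by apply/bigmin_gtP; split.
have [c c_ab m_c] : exists2 c, c \in `[a, b]%R & m c = 0.
  by apply: IVT => //; rewrite ge_min le_max m_a (ltW m_b) orbT.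
have [m1|[k mk]] := bigmin_id_or_attained 1 (f^~ c).
  by move: m_c; rewrite /m m1 => /eqP; rewrite oner_eq0.
move: c_ab; rewrite in_itv /= => c_ab.
by apply: (min_nonzero c k) => // [j|]; rewrite -mk ?bigmin_le.
Qed.

End MinimumPositivity.

Section InversePositivity.
Variable R : realType.
Variables (n : nat) (a : 'rV[R]_n) (M : 'M[R]_n).
Hypothesis a_pos : forall i, 0 < a ord0 i.
Hypothesis M_ge0 : forall i j, 0 <= M i j.

Lemma min_entry_row_bound (s : R) (V : 'cV[R]_n) k :
  (forall j, ((s%:M + (diag_mx a - M)) *m V) j ord0 = 1) ->
  (forall j, V k ord0 <= V j ord0) -> V k ord0 <= 0 ->
  1 <= (s + a ord0 k - \sum_j M k j) * V k ord0.
Proof.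
move=> V_eq V_min Vk0; rewrite -(V_eq k) mulmxDl mul_scalar_mx mulmxBl mul_diag_mx.
rewrite !mxE mulrBl mulr_suml mulrDl addrA lerD2l lerN2.
by apply: ler_sum => j _; rewrite ler_wpM2l.
Qed.

Lemma metzler_hurwitz_inverse_pos :
  hurwitz (- (diag_mx a - M)) ->
  forall i, 0 < (invmx (diag_mx a - M) *m (const_mx 1 : 'cV[R]_n)) i ord0.
Proof.
set H := diag_mx a - M => hH.
have det_ne0 s : 0 <= s -> \det (s%:M + H) != 0.
  by move=> s0; have := hurwitz_det_neq0 hH s0; rewrite opprK.
pose W (s : R) := (\det (s%:M + H))^-1 *: (\adj (s%:M + H) *m (const_mx 1 : 'cV[R]_n)).
have W_eq s : 0 <= s -> forall k, ((s%:M + H) *m W s) k ord0 = 1.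
  move=> s0 k; rewrite -scalemxAr mulmxA mul_mx_adj mul_scalar_mx scalerA.
  by rewrite mulVf ?det_ne0 // scale1r mxE.
have W0 : invmx H *m const_mx 1 = W 0.
  have H_eq : 0%:M + H = H by rewrite -scalemx1 scale0r add0r.
  have := det_ne0 0 (lexx 0); rewrite /W H_eq => detH.
  by rewrite /invmx unitmxE unitfE detH scalemxAl.
pose S := \sum_k \sum_j M k j.
have S0 : 0 <= S by rewrite sumr_ge0 // => k _; rewrite sumr_ge0.
have row_le_S k : \sum_j M k j <= S.
  by rewrite /S [X in _ <= X](bigD1 k) //= lerDl sumr_ge0 // => l _; rewrite sumr_ge0.
have min_nonpos_bound s k : 0 <= s -> (forall j, W s k ord0 <= W s j ord0) ->
    W s k ord0 <= 0 -> 1 <= (s + a ord0 k - \sum_j M k j) * W s k ord0.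
  by move=> s0; apply: min_entry_row_bound; exact: W_eq.
move=> i; rewrite W0; apply: (pos_of_min_never_zero (f := fun k s => W s k ord0) S0).
- by move=> k s /andP[s0 _]; apply: continuous_cramer_entry; rewrite det_ne0.
- move=> k; case: (@arg_minP _ _ _ i predT (fun j => W S j ord0) isT) => l _ l_min.
  apply: lt_le_trans (l_min k isT); rewrite ltNge; apply/negP => Wl0.
  have := min_nonpos_bound S l S0 (fun j => l_min j isT) Wl0.
  have := row_le_S l; have := a_pos l; nra.
- move=> s k /andP[s0 _] W_min Wk0.
  have := min_nonpos_bound s k s0 W_min; rewrite Wk0 mulr0 lexx => /(_ isT).
  by rewrite ler10.
Qed.

End InversePositivity.

Section Robustness.
Variable R : realType.

Lemma gamma_robust_iff_le n (A M : 'M[R]_n) {u : 'cV[R]_n} :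
  hurwitz (- (A - M)) -> offdiag_nonpos (A - M) ->
  (forall i, 0 < u i ord0) -> (forall i, ((A - M) *m u) i ord0 = 1) ->
  forall gamma, 0 < gamma -> gamma_robust A M gamma <-> forall i, u i ord0 <= gamma.
Proof.
move=> hH H_offdiag u_pos Hu gamma gamma0; split=> [robust i | u_le].
  have le_gamma := gamma_robust_inverse_bound i robust gamma0 (K := 1) (v := u).
  rewrite mulr1 in le_gamma; apply: le_trans (ler_norm _) (le_gamma _) => j.
  by rewrite Hu normr1.
split=> // d x _ sol B dB t i t0.
have B0 : 0 <= B := le_trans (normr_ge0 _) (dB 0 i (lexx 0)).
rewrite (le_trans (zero_state_solution_bound H_offdiag u_pos Hu sol dB i t0)) //.
by rewrite mulrC ler_wpM2r.
Qed.

Lemma diag_sub_offdiag_nonpos n (a : 'rV[R]_n) (M : 'M[R]_n) :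
  (forall i j, 0 <= M i j) -> offdiag_nonpos (diag_mx a - M).
Proof. by move=> M_ge0 i j ij; rewrite !mxE (negPf ij) mulr0n sub0r oppr_le0. Qed.

Lemma block_scalar_offdiag_nonpos n (H : 'M[R]_n) (c : R) :
  offdiag_nonpos H -> offdiag_nonpos (block_mx H 0 0 c%:M : 'M[R]_(n + 1)).
Proof.
move=> H_offdiag i j.
case: (split_ordP i) => k ->; case: (split_ordP j) => l ->.
- by rewrite block_mxEul (inj_eq (@lshift_inj _ _)); exact: H_offdiag.
- by rewrite block_mxEur mxE.
- by rewrite block_mxEdl mxE.
- by rewrite !ord1 eqxx.
Qed.

Lemma block_scalar_mul_col n (H : 'M[R]_n) (u : 'cV[R]_n) (c : R) :
  (forall i, (H *m u) i ord0 = 1) -> c != 0 ->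
  forall i, ((block_mx H 0 0 c%:M : 'M[R]_(n + 1)) *m col_mx u (const_mx c^-1)) i ord0 = 1.
Proof.
move=> Hu c0 i; rewrite mul_block_col !mul0mx addr0 add0r.
case: (split_ordP i) => k ->; rewrite ?col_mxEu ?col_mxEd //.
by rewrite mul_scalar_mx !mxE mulfV.
Qed.

Lemma gamma_robust_block_iff n (A M : 'M[R]_n) (u : 'cV[R]_n) (c : R) :
  hurwitz (- (A - M)) -> offdiag_nonpos (A - M) ->
  (forall i, 0 < u i ord0) -> (forall i, ((A - M) *m u) i ord0 = 1) -> 0 < c ->
  forall gamma, 0 < gamma ->
  gamma_robust (block_mx A 0 0 (c%:M : 'M[R]_1)) (block_mx M 0 0 (0 : 'M[R]_1)) gamma <->
  (forall i, u i ord0 <= gamma) /\ c^-1 <= gamma.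
Proof.
move=> hH H_offdiag u_pos Hu c0 gamma gamma0.
pose ub : 'cV[R]_(n + 1) := col_mx u (const_mx c^-1).
have Hb_eq :
    block_mx A 0 0 c%:M - block_mx M 0 0 0 = block_mx (A - M) 0 0 (c%:M : 'M[R]_1).
  by rewrite opp_block_mx add_block_mx !subr0.
rewrite (gamma_robust_iff_le (u := ub) _ _ _ _ gamma0) ?Hb_eq.
- split=> [ub_le | [u_le c_le] i].
    split=> [i|]; [have := ub_le (lshift 1 i) | have := ub_le (rshift n ord0)].
      by rewrite col_mxEu.
    by rewrite col_mxEd mxE.
  by case: (split_ordP i) => k ->; [rewrite col_mxEu | rewrite col_mxEd mxE].
- rewrite opp_block_mx !oppr0.
  have -> : - (c%:M : 'M[R]_1) = (- c)%:M by apply/matrixP => i j; rewrite !mxE mulNrn.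
  exact: hurwitz_block_scalar.
- exact: block_scalar_offdiag_nonpos.
- move=> i; case: (split_ordP i) => k ->; first by rewrite col_mxEu.
  by rewrite col_mxEd mxE invr_gt0.
- exact: block_scalar_mul_col Hu (lt0r_neq0 c0).
Qed.

Lemma bigmax_le_iff (I : finType) (F : I -> R) (g : R) :
  0 <= g -> \big[Num.max/0]_i F i <= g <-> forall i, F i <= g.
Proof.
move=> g0; split=> [F_le i | F_le]; last exact: bigmax_le.
exact: le_trans (le_bigmax 0 F i) F_le.
Qed.

End Robustness.

Local Close Scope classical_set_scope.

Theorem mainTheorem6 (R : realType) (N : nat) (a : 'rV[R]_N) (M : 'M[R]_N)
  (aN1 gamma : R) :
  (0 < N)%N ->
  (forall i, 0 < a ord0 i) ->
  (forall i, M i i = 0) ->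
  (forall i j, 0 <= M i j) ->
  0 < gamma ->
  gamma_robust (diag_mx a) M gamma ->
  0 < aN1 ->
  let u := invmx (diag_mx a - M) *m (const_mx 1 : 'cV[R]_N) in
  scalable_change (diag_mx a) M
    (block_mx (diag_mx a) 0 0 (aN1%:M : 'M[R]_1))
    (block_mx M 0 0 (0 : 'M[R]_1))
  <-> (\big[Num.max/0]_(i < N) u i ord0)^-1 <= aN1.
Proof.
move=> N0 a_pos _ M_ge0 _ [hH _] aN1_pos u; set H := diag_mx a - M in hH u *.
have u_pos : forall i, 0 < u i ord0 := metzler_hurwitz_inverse_pos a_pos M_ge0 hH.
have Hu i : (H *m u) i ord0 = 1 by rewrite mulmxA mulmxV ?hurwitz_unitmx // mul1mx mxE.
have H_offdiag := diag_sub_offdiag_nonpos a M_ge0.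
set m := \big[Num.max/0]_(i < N) u i ord0.
have m_pos : 0 < m.
  exact: lt_le_trans (u_pos (Ordinal N0)) (le_bigmax 0 (fun i => u i ord0) _).
have robust_iff g : 0 < g -> gamma_robust (diag_mx a) M g <-> m <= g.
  move=> g0; rewrite bigmax_le_iff; last exact: ltW.
  exact: gamma_robust_iff_le hH H_offdiag u_pos Hu _ g0.
have robust_b_iff g : 0 < g ->
    gamma_robust (block_mx (diag_mx a) 0 0 (aN1%:M : 'M[R]_1))
      (block_mx M 0 0 (0 : 'M[R]_1)) g <-> m <= g /\ aN1^-1 <= g.
  move=> g0; rewrite bigmax_le_iff; last exact: ltW.
  exact: (gamma_robust_block_iff hH H_offdiag u_pos Hu aN1_pos g0).
rewrite -[X in _ <= X]invrK lef_pV2 ?posrE ?invr_gt0 //; split=> [scalable | aN1_le g g0].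
- by have [] := (robust_b_iff m m_pos).1 (scalable m m_pos ((robust_iff m m_pos).2 (lexx m))).
- move=> /(robust_iff g g0) m_g; apply/(robust_b_iff g g0).
  by split=> //; exact: le_trans aN1_le m_g.
Qed.
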